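(* Let $T$ be a complete theory and suppose the formula $\theta(x;y)$ has the $\infty$-compatible order property. Then the formula $\varphi(x;y,z):=\theta(x;y)\wedge\neg\theta(x;z)$ has $SOP_3$.
   Context: Work in a sufficiently saturated model of $T$. The characteristic sequence of $\theta$ is $P_n(y_1,\dots,y_n):=\exists x\bigwedge_{i\le n}\theta(x;y_i)$. $\theta$ has the $\infty$-compatible order property if there exist $\langle a_i,b_i:i<\omega\rangle$ such that for all $m<\omega$ and all indices, $P_{2m}(a_{i_1},b_{j_1},\dots,a_{i_m},b_{j_m})$ holds iff $\max\{i_1,\dots,i_m\}<\min\{j_1,\dots,j_m\}$. A formula $\varphi(x;w)$ has $SOP_3$ if there are a formula $\psi(x;w)$, an indiscernible sequence $\langle \bar a_i:i<\omega\rangle$ and $\langle c_j:j<\omega\rangle$ such that: (1) $\{\varphi(x;w),\psi(x;w)\}$ is contradictory; (2) $\varphi(c_j;\bar a_i)$ for $i\le j$ and $\psi(c_j;\bar a_i)$ for $i>j$; (3) for $i<j$, $\{\varphi(x;\bar a_j),\psi(x;\bar a_i)\}$ is contradictory. In particular $T$ then has $SOP_3$. *)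

From mathcomp Require Import all_boot.
Set Implicit Arguments. Unset Strict Implicit. Unset Printing Implicit Defensive.

Record signature := Signature {
  fsym : Type; rsym : Type;
  farity : fsym -> nat; rarity : rsym -> nat }.

Section FOL.
Variable L : signature.

Inductive term : Type :=
  | tvar : nat -> term
  | tapp : forall f : fsym L, ('I_(@farity L f) -> term) -> term.

(* de Bruijn formulas: [fex]/[fall] bind variable 0 *)
Inductive formula : Type :=
  | fbot : formula
  | feq : term -> term -> formula
  | frel : forall r : rsym L, ('I_(@rarity L r) -> term) -> formula
  | fneg : formula -> formula
  | fand : formula -> formula -> formula
  | for_ : formula -> formula -> formula
  | fimp : formula -> formula -> formula
  | fex : formula -> formula
  | fall : formula -> formula.

Record structure := Structure {
  dom :> Type;
  inh : dom;
  interp_f : forall f : fsym L, ('I_(@farity L f) -> dom) -> dom;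
  interp_r : forall r : rsym L, ('I_(@rarity L r) -> dom) -> Prop }.

Definition scons {A : Type} (a : A) (e : nat -> A) : nat -> A :=
  fun i => match i with 0 => a | j.+1 => e j end.

Fixpoint eval_term (M : structure) (e : nat -> M) (t : term) : M :=
  match t with
  | tvar i => e i
  | tapp f ts => @interp_f M f (fun i => eval_term e (ts i))
  end.

Fixpoint sat (M : structure) (e : nat -> M) (phi : formula) : Prop :=
  match phi with
  | fbot => False
  | feq t1 t2 => eval_term e t1 = eval_term e t2
  | frel r ts => @interp_r M r (fun i => eval_term e (ts i))
  | fneg p => ~ sat e p
  | fand p q => sat e p /\ sat e q
  | for_ p q => sat e p \/ sat e q
  | fimp p q => sat e p -> sat e q
  | fex p => exists a : M, sat (scons a e) p
  | fall p => forall a : M, sat (scons a e) p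
  end.

Fixpoint term_below (N : nat) (t : term) : Prop :=
  match t with
  | tvar i => i < N
  | tapp f ts => forall i, term_below N (ts i)
  end.

Fixpoint formula_below (N : nat) (phi : formula) : Prop :=
  match phi with
  | fbot => True
  | feq t1 t2 => term_below N t1 /\ term_below N t2
  | frel r ts => forall i, term_below N (ts i)
  | fneg p => formula_below N p
  | fand p q | for_ p q | fimp p q => formula_below N p /\ formula_below N q
  | fex p | fall p => formula_below N.+1 p
  end.

Definition up (s : nat -> nat) : nat -> nat :=
  fun i => match i with 0 => 0 | j.+1 => (s j).+1 end.

Fixpoint rename_term (s : nat -> nat) (t : term) : term :=
  match t with
  | tvar i => tvar (s i)
  | tapp f ts => tapp (fun i => rename_term s (ts i))
  end.

Fixpoint rename (s : nat -> nat) (phi : formula) : formula :=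
  match phi with
  | fbot => fbot
  | feq t1 t2 => feq (rename_term s t1) (rename_term s t2)
  | frel r ts => frel (fun i => rename_term s (ts i))
  | fneg p => fneg (rename s p)
  | fand p q => fand (rename s p) (rename s q)
  | for_ p q => for_ (rename s p) (rename s q)
  | fimp p q => fimp (rename s p) (rename s q)
  | fex p => fex (rename (up s) p)
  | fall p => fall (rename (up s) p)
  end.

Definition tup_env (M : structure) (n : nat) (x : 'I_n -> M) (rest : nat -> M)
  : nat -> M :=
  fun i => match (insub i : option 'I_n) with
           | Some j => x j
           | None => rest (i - n)
           end.

Definition default_env (M : structure) : nat -> M := fun _ => @inh M.

(* A partitioned formula phi(x; w) with |x| = n, |w| = m: variables 0..n-1
   are x, variables n..n+m-1 are w. *)
Definition holds (M : structure) (n m : nat) (phi : formula)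
  (x : 'I_n -> M) (w : 'I_m -> M) : Prop :=
  sat (tup_env x (tup_env w (default_env M))) phi.

Definition cat_env (M : structure) (m : nat) (s : seq ('I_m -> M)) : nat -> M :=
  foldr (fun a r => tup_env a r) (default_env M) s.

(** Indiscernible sequence (over the empty set) of m-tuples *)
Definition indiscernible (M : structure) (m : nat) (a : nat -> ('I_m -> M)) :=
  forall (chi : formula) (s t : seq nat),
    size s = size t -> sorted ltn s -> sorted ltn t ->
    formula_below (size s * m) chi ->
    (sat (cat_env (map a s)) chi <-> sat (cat_env (map a t)) chi).

(** aleph_1-saturation: every finitely satisfiable set of formulas in
    finitely many variables x (variables 0..n-1) over a countable set of
    parameters (the range of p, placed at variables n, n+1, ...) is realized. *)
Definition aleph1_saturated (M : structure) :=
  forall (n : nat) (p : nat -> M) (Sigma : formula -> Prop),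
    (forall (r : nat) (chis : 'I_r -> formula),
        (forall i, Sigma (chis i)) ->
        exists x : 'I_n -> M, forall i, sat (tup_env x p) (chis i)) ->
    exists x : 'I_n -> M, forall chi, Sigma chi -> sat (tup_env x p) chi.

(** The infinity-compatible order property of theta(x; y), |x| = n, |y| = k.
    P_{2m}(a_{i1}, b_{j1}, ..., a_{im}, b_{jm}) holds iff
    max{i_l} < min{j_l}, i.e. iff i_l < j_l' for all l, l'. *)
Definition has_inf_COP (M : structure) (n k : nat) (theta : formula) :=
  exists a b : nat -> ('I_k -> M),
    forall (m : nat) (I J : 'I_m -> nat),
      (exists x : 'I_n -> M,
          forall l, holds theta x (a (I l)) /\ holds theta x (b (J l)))
      <-> (forall l l', I l < J l').

Definition has_SOP3 (M : structure) (n m : nat) (phi : formula) :=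
  exists (psi : formula) (a : nat -> ('I_m -> M)) (c : nat -> ('I_n -> M)),
    [/\ formula_below (n + m) psi,
        indiscernible a,
        ~ (exists (x : 'I_n -> M) (w : 'I_m -> M), holds phi x w /\ holds psi x w),
        (forall i j, i <= j -> holds phi (c j) (a i)) /\
        (forall i j, j < i -> holds psi (c j) (a i)) &
        (forall i j, i < j ->
           ~ exists x : 'I_n -> M, holds phi x (a j) /\ holds psi x (a i))].

(** phi(x; y, z) := theta(x; y) /\ ~ theta(x; z), with |y| = |z| = k:
    variables 0..n-1 = x, n..n+k-1 = y, n+k..n+2k-1 = z. *)
Definition phi_of (n k : nat) (theta : formula) : formula :=
  fand theta (fneg (rename (fun i => if i < n then i else i + k) theta)).

End FOL.

From mathcomp Require Import all_boot zify.
From Stdlib Require Import FunctionalExtensionality IndefiniteDescription Classical.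
Set Implicit Arguments. Unset Strict Implicit. Unset Printing Implicit Defensive.

(* Take witnesses (a_i), (b_i) of the infinity-COP of theta and the pairs e_i := (a_i, b_i).
   The COP says that no x satisfies theta(x; a_j) /\ theta(x; b_i) for i <= j, and that for
   i_0 < ... < i_K and p_0 < K some x satisfies theta(x; a_(i_p)) for p <= p_0 and
   theta(x; b_(i_p)) for p > p_0.  Both are properties of the Ehrenfeucht-Mostowski type of
   (e_i), so by Ramsey's theorem and aleph_1-saturation they hold of an indiscernible
   sequence (e'_i) realizing that type.  By saturation again, for each j some c_j satisfies
   theta(x; a'_i) for i <= j and theta(x; b'_i) for i > j.  Then phi = theta(x; y) /\ ~ theta(x; z)
   and psi = theta(x; z) /\ ~ theta(x; y) witness SOP_3 along (e'_i) and (c_j). *)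


Section Syntax.
Variable L : signature.
Implicit Types (phi : formula L) (t : term L) (s : nat -> nat).

Lemma eval_rename_term (M : structure L) (e : nat -> M) s t :
  eval_term e (rename_term s t) = eval_term (e \o s) t.
Proof.
elim: t => [i|f ts IH] //=; congr interp_f.
by apply: functional_extensionality => i; exact: IH.
Qed.

Lemma scons_comp_up (M : structure L) (e : nat -> M) a s :
  scons a e \o up s = scons a (e \o s).
Proof. by apply: functional_extensionality => -[|i]. Qed.

Lemma sat_rename (M : structure L) phi : forall (e : nat -> M) s,
  sat e (rename s phi) <-> sat (e \o s) phi.
Proof.
elim: phi => [|t1 t2|r ts|p IH|p IHp q IHq|p IHp q IHq|p IHp q IHq|p IH|p IH] e s /=;
  rewrite ?eval_rename_term ?IH ?IHp ?IHq //.
- suff -> : (fun i => eval_term e (rename_term s (ts i))) =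
            (fun i => eval_term (e \o s) (ts i)) by [].
  by apply: functional_extensionality => i; rewrite eval_rename_term.
- by split=> -[a Ha]; exists a; move: Ha; rewrite IH scons_comp_up.
- by split=> Ha a; move: (Ha a); rewrite IH scons_comp_up.
Qed.

Lemma eval_term_below (M : structure L) (e e' : nat -> M) N t :
  term_below N t -> (forall v, v < N -> e v = e' v) -> eval_term e t = eval_term e' t.
Proof.
elim: t => [i|f ts IH] /= Ht He; first exact: He.
by congr interp_f; apply: functional_extensionality => i; exact: IH.
Qed.

Lemma sat_below (M : structure L) phi : forall N (e e' : nat -> M),
  formula_below N phi -> (forall v, v < N -> e v = e' v) -> (sat e phi <-> sat e' phi).
Proof.
elim: phi => [|t1 t2|r ts|p IH|p IHp q IHq|p IHp q IHq|p IHp q IHq|p IH|p IH] N e e' /=.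
- by [].
- by move=> [H1 H2] He; rewrite (eval_term_below H1 He) (eval_term_below H2 He).
- move=> H He.
  suff -> : (fun i => eval_term e (ts i)) = (fun i => eval_term e' (ts i)) by [].
  by apply: functional_extensionality => i; rewrite (eval_term_below (H i) He).
- by move=> H He; rewrite (IH _ _ _ H He).
- by move=> [H1 H2] He; rewrite (IHp _ _ _ H1 He) (IHq _ _ _ H2 He).
- by move=> [H1 H2] He; rewrite (IHp _ _ _ H1 He) (IHq _ _ _ H2 He).
- by move=> [H1 H2] He; rewrite (IHp _ _ _ H1 He) (IHq _ _ _ H2 He).
- move=> H He; have He' a v : v < N.+1 -> scons a e v = scons a e' v by case: v => //= v /He.
  by split=> -[a Ha]; exists a; apply/(IH _ _ _ H (He' a)).
- move=> H He; have He' a v : v < N.+1 -> scons a e v = scons a e' v by case: v => //= v /He.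
  by split=> Ha a; apply/(IH _ _ _ H (He' a)).
Qed.

Lemma term_below_rename N N' s t : (forall v, v < N -> s v < N') ->
  term_below N t -> term_below N' (rename_term s t).
Proof. by move=> Hs; elim: t => [i|f ts IH] /=; [exact: Hs | move=> H i; exact: IH]. Qed.

Lemma formula_below_rename phi : forall N N' s, (forall v, v < N -> s v < N') ->
  formula_below N phi -> formula_below N' (rename s phi).
Proof.
elim: phi => [|t1 t2|r ts|p IH|p IHp q IHq|p IHp q IHq|p IHp q IHq|p IH|p IH] N N' s Hs //=.
- by move=> [H1 H2]; split; exact: term_below_rename Hs _.
- by move=> H i; exact: term_below_rename Hs (H i).
- exact: IH.
- by move=> [H1 H2]; split; [exact: IHp H1 | exact: IHq H2].
- by move=> [H1 H2]; split; [exact: IHp H1 | exact: IHq H2].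
- by move=> [H1 H2]; split; [exact: IHp H1 | exact: IHq H2].
- by apply: IH => -[|v] //=; exact: Hs.
- by apply: IH => -[|v] //=; exact: Hs.
Qed.

Lemma term_below_mono N N' t : N <= N' -> term_below N t -> term_below N' t.
Proof.
by move=> HN; elim: t => [i|f ts IH] /=; [move=> H; exact: leq_trans H HN | move=> H i; exact: IH].
Qed.

Lemma formula_below_mono phi : forall N N', N <= N' -> formula_below N phi -> formula_below N' phi.
Proof.
elim: phi => [|t1 t2|r ts|p IH|p IHp q IHq|p IHp q IHq|p IHp q IHq|p IH|p IH] N N' HN //=.
- by move=> [H1 H2]; split; exact: term_below_mono HN _.
- by move=> H i; exact: term_below_mono HN _.
- exact: IH.
- by move=> [H1 H2]; split; [exact: IHp H1 | exact: IHq H2].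
- by move=> [H1 H2]; split; [exact: IHp H1 | exact: IHq H2].
- by move=> [H1 H2]; split; [exact: IHp H1 | exact: IHq H2].
- exact: IH.
- exact: IH.
Qed.

Definition prepend_env (M : structure L) n (w e : nat -> M) : nat -> M :=
  fun v => if v < n then w v else e (v - n).

Lemma prepend_envS (M : structure L) n (w e : nat -> M) a :
  prepend_env n w (scons a e) = prepend_env n.+1 (fun v => if v < n then w v else a) e.
Proof.
apply: functional_extensionality => v; rewrite /prepend_env.
case: (ltngtP v n) => [Hv|Hv|->]; last by rewrite ltnSn subnn.
- by rewrite ltnS ltnW.
- by rewrite ltnNge Hv -(subnSK Hv).
Qed.

Definition fexn n phi := iter n (@fex L) phi.

Lemma sat_fexn (M : structure L) n phi : forall (e : nat -> M),
  sat e (fexn n phi) <-> exists w : nat -> M, sat (prepend_env n w e) phi.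
Proof.
elim: n => [|n IH] e /=.
  have E w : prepend_env 0 w e = e.
    by apply: functional_extensionality => v; rewrite /prepend_env subn0.
  by split=> [H|[w]]; [exists e|]; rewrite E.
split=> [[a /IH [w Hw]]|[w Hw]].
  by exists (fun v => if v < n then w v else a); rewrite -prepend_envS.
exists (w n); apply/IH; exists w; rewrite prepend_envS.
suff -> : prepend_env n.+1 (fun v => if v < n then w v else w n) e = prepend_env n.+1 w e by [].
apply: functional_extensionality => v; rewrite /prepend_env.
by rewrite ltnS; case: (ltngtP v n) => // ->.
Qed.

Lemma formula_below_fexn n phi N : formula_below (n + N) phi -> formula_below N (fexn n phi).
Proof. by elim: n N => [|n IH] N //= H; apply: IH; rewrite addnS. Qed.

End Syntax.

Definition increasing (j : nat -> nat) := {homo j : a b / a < b}.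

Definition homogeneous N (c : seq nat -> Prop) (j : nat -> nat) :=
  forall u v, sorted ltn u -> sorted ltn v -> size u = N -> size v = N ->
    (c (map j u) <-> c (map j v)).

Lemma increasing_id : increasing id. Proof. by []. Qed.

Lemma increasing_comp f g : increasing f -> increasing g -> increasing (f \o g).
Proof. by move=> Hf Hg a b /Hg /Hf. Qed.

Lemma increasingS f : (forall i, f i < f i.+1) -> increasing f.
Proof. exact: homo_ltn ltn_trans. Qed.

Lemma sorted_map_increasing f u : increasing f -> sorted ltn u -> sorted ltn (map f u).
Proof. by move=> Hf; apply: homo_sorted. Qed.

Lemma increasing_ltn f a b : increasing f -> (f a < f b) = (a < b).
Proof.
move=> Hf; case: (ltngtP a b) => [/Hf -> // | /Hf Hba | ->]; last exact: ltnn.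
by apply/negbTE; rewrite -leqNgt ltnW.
Qed.

Lemma increasing_enum (P : nat -> Prop) : (forall n, exists k, n <= k /\ P k) ->
  exists2 q, increasing q & forall i, P (q i).
Proof.
move=> H; have [F HF] := functional_choice _ H.
pose q := fix q i := if i is i'.+1 then F (q i').+1 else F 0.
exists q; first by apply: increasingS => i /=; case: (HF (q i).+1).
by case=> [|i] /=; [case: (HF 0) | case: (HF (q i).+1)].
Qed.

Lemma infinite_pigeonhole (col : nat -> Prop) :
  exists P : Prop, exists2 q, increasing q & forall i, col (q i) <-> P.
Proof.
have [Hinf|Hfin] := classic (forall n, exists k, n <= k /\ col k).
  by exists True; have [q Hq Hcol] := increasing_enum Hinf; exists q.
exists False; suff [q Hq Hcol] : exists2 q, increasing q & forall i, ~ col (q i).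
  by exists q => // i; split=> // /Hcol.
apply: (@increasing_enum (fun k => ~ col k)) => n; apply: NNPP => Hn; apply: Hfin => n'.
apply: NNPP => Hn'; apply: Hn; exists (maxn n n'); split; first exact: leq_maxl.
by move=> Hc; apply: Hn'; exists (maxn n n'); split; first exact: leq_maxr.
Qed.

Lemma sorted_in_range h ws : increasing h -> sorted ltn ws ->
  (forall w, w \in ws -> exists p, w = h p) ->
  exists u, [/\ sorted ltn u, size u = size ws & ws = map h u].
Proof.
move=> Hh; elim: ws => [|w ws IH] Hs Hr; first by exists [::].
have [u [Hu Hsz Ews]] : exists u, [/\ sorted ltn u, size u = size ws & ws = map h u].
  by apply: IH => [|x Hx]; [exact: path_sorted Hs | apply: Hr; rewrite inE Hx orbT].
have [p Ew] := Hr w (mem_head _ _).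
exists (p :: u); split; rewrite /= ?Hsz ?Ews ?Ew //.
move: Hs; rewrite Ews Ew; case: {Hsz Ews} u Hu => //= q u ->.
by rewrite increasing_ltn // andbT => /andP[].
Qed.

Theorem ramsey N (c : seq nat -> Prop) : exists j, increasing j /\ homogeneous N c j.
Proof.
elim: N c => [|N IHN] c.
  by exists id; split=> // [] [|? ?] [|? ?].
have [R HR] := functional_choice _ IHN.
pose tail_col (h : nat -> nat) u := c (h 0 :: map (h \o succn) u).
(* H k.+1 is a subsequence of the tail of H k on which the colour of the N-sets, prefixed
   by the head H k 0, is constant; along the heads the colour depends on the first element only. *)
pose H := fix H k := if k is k'.+1 then H k' \o succn \o R (tail_col (H k')) else id.
pose col k := tail_col (H k) (map (R (tail_col (H k))) (iota 0 N)).
have incH k : increasing (H k).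
  elim: k => [|k IH] //=; do 2![apply: increasing_comp => //]; exact: (HR _).1.
have colH k u : sorted ltn u -> size u = N -> c (H k 0 :: map (H k.+1) u) <-> col k.
  move=> Hu Hsz; have [_ Hhom] := HR (tail_col (H k)).
  rewrite /col -(Hhom u (iota 0 N)) ?size_iota ?iota_ltn_sorted //.
  by rewrite /tail_col -map_comp.
have rangeH a b i : a <= b -> exists p, H b i = H a p.
  move=> /subnK <-; elim: (b - a) i => [|d IH] i; first by exists i.
  by rewrite addSn; exact: IH.
have incx : increasing (fun k => H k 0).
  by apply: increasingS => k /=; rewrite increasing_ltn.
have [P [q incq colq]] := infinite_pigeonhole col.
exists (fun i => H (q i) 0); split; first exact: increasing_comp incx incq.
suff key u : sorted ltn u -> size u = N.+1 -> c (map (fun i => H (q i) 0) u) <-> P.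
  by move=> u v Hu Hv Hsu Hsv; rewrite key // key.
case: u => [|u0 u] //= Hs [Hsz].
have Hu : sorted ltn u := path_sorted Hs.
have [u' [Hu' Hsz' ->]] : exists u', [/\ sorted ltn u', size u' = size (map (fun i => H (q i) 0) u)
    & map (fun i => H (q i) 0) u = map (H (q u0).+1) u'].
  apply: sorted_in_range => //; first exact: sorted_map_increasing (increasing_comp incx incq) Hu.
  move=> w /mapP [t Ht ->]; apply: rangeH.
  by apply: incq; move/allP: (order_path_min ltn_trans Hs); apply.
by rewrite colH // Hsz' size_map.
Qed.

Lemma nth_le_sumn (s : seq nat) b : nth 0 s b <= sumn s.
Proof. by elim: s b => [|x s IH] [|b] //=; rewrite ?leq_addr // (leq_trans (IH b)) ?leq_addl. Qed.

Section Blocks.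
Variables (L : signature) (M : structure L).

Lemma tup_envL n (x : 'I_n -> M) rest i (Hi : i < n) : tup_env x rest i = x (Ordinal Hi).
Proof. by rewrite /tup_env insubT. Qed.

Lemma tup_envR n (x : 'I_n -> M) rest i : n <= i -> tup_env x rest i = rest (i - n).
Proof. by move=> Hi; rewrite /tup_env insubF // ltnNge Hi. Qed.

Lemma tup_env_ord n (x : 'I_n -> M) rest : (fun o : 'I_n => tup_env x rest o) = x.
Proof. by apply: functional_extensionality => o; rewrite tup_envL; congr x; apply: val_inj. Qed.

Variable m : nat.
Hypothesis m_gt0 : 0 < m.

Lemma block_div b o : o < m -> (b * m + o) %/ m = b.
Proof. by move=> Ho; rewrite divnMDl // divn_small // addn0. Qed.

Lemma block_mod b o : o < m -> (b * m + o) %% m = o.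
Proof. by move=> Ho; rewrite modnMDl modn_small. Qed.

Lemma block_ltn b o c : o < m -> (b * m + o < c * m) = (b < c).
Proof. by move=> Ho; rewrite -ltn_divLR // block_div. Qed.

Definition seq_env (g : nat -> 'I_m -> M) : nat -> M :=
  fun v => g (v %/ m) (Ordinal (ltn_pmod v m_gt0)).

Lemma seq_env_block g b o (Ho : o < m) : seq_env g (b * m + o) = g b (Ordinal Ho).
Proof.
rewrite /seq_env; move: (ltn_pmod _ _); rewrite block_div // => Ho'.
by congr (g b _); apply: val_inj; rewrite /= block_mod.
Qed.

Definition default_tuple : 'I_m -> M := fun _ => inh M.

Lemma cat_env_block (s : seq ('I_m -> M)) b o (Ho : o < m) : b < size s ->
  cat_env s (b * m + o) = nth default_tuple s b (Ordinal Ho).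
Proof.
elim: s b => [|x s IH] [|b] //= Hb; rewrite /cat_env /=.
  by rewrite mul0n add0n tup_envL.
by rewrite tup_envR ?mulSn -?addnA ?leq_addr // addKn; exact: IH.
Qed.

Definition block_pos (s : seq nat) (v : nat) := nth 0 s (v %/ m) * m + v %% m.

Lemma cat_env_map g s v : v < size s * m -> cat_env (map g s) v = seq_env g (block_pos s v).
Proof.
move=> Hv; have Ho := ltn_pmod v m_gt0.
have Hb : v %/ m < size s by rewrite ltn_divLR.
by rewrite {1}(divn_eq v m) cat_env_block ?size_map // seq_env_block (nth_map 0).
Qed.

Lemma sat_block_pos g s (chi : formula L) : formula_below (size s * m) chi ->
  (sat (seq_env g) (rename (block_pos s) chi) <-> sat (cat_env (map g s)) chi).
Proof.
by move=> Hb; rewrite sat_rename; apply: sat_below Hb _ => v Hv; rewrite cat_env_map.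
Qed.

Lemma formula_below_block_pos s (chi : formula L) : formula_below (size s * m) chi ->
  formula_below ((sumn s).+1 * m) (rename (block_pos s) chi).
Proof.
apply: formula_below_rename => v _; rewrite block_ltn ?ltn_pmod //.
by rewrite ltnS nth_le_sumn.
Qed.

End Blocks.

Section BlockTypes.
Variables (L : signature) (M : structure L) (m : nat).
Hypothesis m_gt0 : 0 < m.
Hypothesis M_sat : aleph1_saturated M.

Local Notation senv := (seq_env m_gt0).

(* Choosing block K of a formula on Lb blocks: block K goes to the m variables
   right after the E := (Lb - K.+1) * m variables reserved for the blocks above K
   (to be quantified away), and the blocks below K come after it. *)
Definition step_rename K Lb v :=
  let E := (Lb - K.+1) * m in
  if v < K * m then E + m + v
  else if v < K * m + m then E + (v - K * m)
  else v - (K * m + m).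

Definition step_formula K Lb (Phi : formula L) :=
  fexn ((Lb - K.+1) * m) (rename (step_rename K Lb) Phi).

Lemma step_env K Lb (f g : nat -> 'I_m -> M) x (w : nat -> M) : K < Lb ->
  (forall i, i < K -> g i = f i) -> g K = x ->
  (forall b o (Ho : o < m), b < Lb - K.+1 -> w (b * m + o) = g (K.+1 + b) (Ordinal Ho)) ->
  forall v, v < Lb * m ->
  (prepend_env ((Lb - K.+1) * m) w (tup_env x (senv f)) \o step_rename K Lb) v = senv g v.
Proof.
move=> HKL Hgf HgK Hw v; rewrite (divn_eq v m) /= /prepend_env /step_rename.
have Ho := ltn_pmod v m_gt0; move: (v %/ m) (v %% m) Ho => b o Ho.
rewrite block_ltn // seq_env_block; set E := (Lb - K.+1) * m.
case: (ltngtP b K) => Hb HbL.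
- rewrite block_ltn // Hb.
  have -> : (E + m + (b * m + o) < E) = false by lia.
  have -> : E + m + (b * m + o) - E = m + (b * m + o) by lia.
  by rewrite tup_envR ?leq_addr // addKn seq_env_block Hgf.
- have -> : (b * m + o < K * m) = false by rewrite block_ltn // ltnNge ltnW.
  have -> : (b * m + o < K * m + m) = false by rewrite -mulSnr block_ltn // ltnNge Hb.
  have -> : b * m + o - (K * m + m) = (b - K.+1) * m + o.
    by rewrite -mulSnr mulnBl addnBAC // leq_mul2r Hb orbT.
  have HbK : b - K.+1 < Lb - K.+1 by lia.
  by rewrite block_ltn // HbK Hw // subnKC.
- subst b; rewrite block_ltn // ltnn -mulSnr block_ltn // ltnSn addKn.
  have -> : (E + o < E) = false by lia.
  rewrite addKn tup_envL HgK.
  by congr x; apply: val_inj.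
Qed.

Lemma sat_step_formula (f : nat -> 'I_m -> M) K Lb Phi x :
  formula_below (Lb * m) Phi -> K < Lb ->
  (sat (tup_env x (senv f)) (step_formula K Lb Phi) <->
   exists g, [/\ forall i, i < K -> g i = f i, g K = x & sat (senv g) Phi]).
Proof.
move=> HPhi HKL; rewrite /step_formula sat_fexn; split=> [[w]|[g [Hgf HgK Hg]]].
  rewrite sat_rename => Hw.
  pose g i := if i < K then f i else if i == K then x else
     (fun o : 'I_m => w ((i - K.+1) * m + o)).
  have Hgf i : i < K -> g i = f i by rewrite /g => ->.
  have HgK : g K = x by rewrite /g ltnn eqxx.
  exists g; split=> //; apply/(sat_below HPhi _).2: Hw => v Hv.
  apply/esym/step_env => // b o Ho _; rewrite /g.
  have -> : (K.+1 + b < K) = false by lia.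
  have -> : (K.+1 + b == K) = false by lia.
  by rewrite addKn.
exists (fun v => senv g (K * m + m + v)); rewrite sat_rename.
apply/(sat_below HPhi _).1: Hg => v Hv; apply/esym/step_env => // b o Ho _.
by rewrite addnA -mulSnr -mulnDl seq_env_block.
Qed.

Inductive conj_closure (Cond : formula L -> Prop) : formula L -> Prop :=
  | conj_closure_true : conj_closure Cond (fneg (@fbot L))
  | conj_closure_and p q :
      conj_closure Cond p -> conj_closure Cond q -> conj_closure Cond (fand p q)
  | conj_closure_base p : Cond p -> conj_closure Cond p.

Variable Cond : formula L -> Prop.
Hypothesis Cond_below : forall Phi, Cond Phi -> exists Lb, formula_below (Lb * m) Phi.
Hypothesis Cond_fin_sat :
  forall Phi, conj_closure Cond Phi -> exists g : nat -> 'I_m -> M, sat (senv g) Phi.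

Lemma conj_closure_below Phi : conj_closure Cond Phi -> exists Lb, formula_below (Lb * m) Phi.
Proof.
elim=> [|p q _ [L1 H1] _ [L2 H2]|p /Cond_below //]; first by exists 0.
by exists (maxn L1 L2); split; apply: formula_below_mono (H1) || apply: formula_below_mono (H2);
  rewrite leq_mul2r ?leq_maxl ?leq_maxr orbT.
Qed.

(* Blocks are chosen one by one: block K realizes, by aleph_1-saturation over the blocks
   already chosen, the type saying that every condition is still satisfiable. *)
Definition extendable K (f : nat -> 'I_m -> M) := forall Phi, conj_closure Cond Phi ->
  exists g, (forall i, i < K -> g i = f i) /\ sat (senv g) Phi.

Definition set_block (f : nat -> 'I_m -> M) K x := fun i => if i == K then x else f i.

Lemma extendable_step K f : extendable K f -> exists x, extendable K.+1 (set_block f K x).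
Proof.
move=> Hf.
pose Sigma Psi := exists Phi Lb, [/\ conj_closure Cond Phi, formula_below (Lb * m) Phi,
  K < Lb & Psi = step_formula K Lb Phi].
have Hfam r (Psis : 'I_r -> formula L) : (forall i, Sigma (Psis i)) ->
    exists2 Phi, conj_closure Cond Phi & forall g, (forall i, i < K -> g i = f i) ->
      sat (senv g) Phi -> forall i, sat (tup_env (g K) (senv f)) (Psis i).
  elim: r Psis => [|r IH] Psis HPsis.
    by exists (fneg (@fbot L)) => [|g _ _ []]; first exact: conj_closure_true.
  have [Phi1 H1 HPhi1] := IH _ (fun i => HPsis (widen_ord (leqnSn r) i)).
  have [Phi2 [Lb [H2 Hb2 HK2 E2]]] := HPsis ord_max.
  exists (fand Phi1 Phi2) => [|g Hgf [Hg1 Hg2] i]; first exact: conj_closure_and.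
  case: (ltnP i r) => Hir.
    have -> : i = widen_ord (leqnSn r) (Ordinal Hir) by apply: val_inj.
    exact: HPhi1.
  have -> : i = ord_max by apply/val_inj/eqP; rewrite /= eqn_leq Hir -ltnS ltn_ord.
  by rewrite E2; apply/sat_step_formula => //; exists g.
have [x Hx] : exists x : 'I_m -> M, forall Psi, Sigma Psi -> sat (tup_env x (senv f)) Psi.
  apply: M_sat => r Psis /Hfam [Phi HPhi Hcomb].
  by have [g [Hgf Hg]] := Hf Phi HPhi; exists (g K); apply: Hcomb.
exists x => Phi HPhi; have [Lb HLb] := conj_closure_below HPhi.
have HK : K < maxn Lb K.+1 by rewrite leq_maxr.
have HLb' : formula_below (maxn Lb K.+1 * m) Phi.
  by apply: formula_below_mono HLb; rewrite leq_mul2r leq_maxl orbT.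
have [|g [Hgf HgK Hg]] := (sat_step_formula f x HLb' HK).1.
  by apply: Hx; exists Phi, (maxn Lb K.+1).
exists g; split=> // i; rewrite ltnS leq_eqVlt /set_block => /orP[/eqP ->|Hi].
  by rewrite eqxx.
by rewrite ltn_eqF // Hgf.
Qed.

Lemma realize_block_type : exists g : nat -> 'I_m -> M, forall Phi, Cond Phi -> sat (senv g) Phi.
Proof.
have [next Hnext] : exists next : nat * (nat -> 'I_m -> M) -> 'I_m -> M,
    forall Kf, extendable Kf.1 Kf.2 -> extendable Kf.1.+1 (set_block Kf.2 Kf.1 (next Kf)).
  apply: (functional_choice (fun Kf (x : 'I_m -> M) =>
    extendable Kf.1 Kf.2 -> extendable Kf.1.+1 (set_block Kf.2 Kf.1 x))) => -[K f] /=.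
  have [/extendable_step [x Hx]|Hn] := classic (extendable K f); first by exists x.
  by exists (fun _ => inh M) => /Hn.
pose fs := fix fs K := if K is K'.+1 then set_block (fs K') K' (next (K', fs K'))
                       else (fun _ _ => inh M).
have ext_fs K : extendable K (fs K).
  elim: K => [Phi /Cond_fin_sat [g Hg]|K IH]; [by exists g | exact: (Hnext (K, fs K))].
have fs_stable K i : i < K -> fs K i = fs i.+1 i.
  elim: K => // K IH; rewrite ltnS leq_eqVlt => /orP[/eqP -> //|Hi] /=.
  by rewrite /set_block ltn_eqF // IH.
exists (fun i => fs i.+1 i) => Phi HPhi; have [Lb HLb] := Cond_below HPhi.
have [g [Hg HgPhi]] := ext_fs Lb Phi (conj_closure_base HPhi).
apply/(sat_below HLb _).1: HgPhi => v Hv.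
by rewrite /seq_env Hg ?fs_stable // ltn_divLR.
Qed.

End BlockTypes.

Definition fiff (L : signature) (p q : formula L) := fand (fimp p q) (fimp q p).

Section Indiscernibles.
Variables (L : signature) (M : structure L) (m : nat).
Hypothesis m_gt0 : 0 < m.
Hypothesis M_sat : aleph1_saturated M.

Local Notation senv := (seq_env m_gt0).
Local Notation block_pos := (block_pos m).

Definition EM_type_included (e e' : nat -> 'I_m -> M) :=
  forall N chi, formula_below (N * m) chi ->
    (forall t, sorted ltn t -> size t = N -> sat (cat_env (map e t)) chi) ->
    forall s, sorted ltn s -> size s = N -> sat (cat_env (map e' s)) chi.

Variable e : nat -> 'I_m -> M.

(* What a sequence g must satisfy, through [senv g], to be indiscernible and to
   realize the EM-type of e. *)
Definition EM_condition (Phi : formula L) :=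
  (exists chi s, [/\ sorted ltn s, formula_below (size s * m) chi,
     forall t, sorted ltn t -> size t = size s -> sat (cat_env (map e t)) chi
     & Phi = rename (block_pos s) chi])
  \/ (exists chi s t, [/\ sorted ltn s, sorted ltn t, size t = size s,
     formula_below (size s * m) chi
     & Phi = fiff (rename (block_pos s) chi) (rename (block_pos t) chi)]).

Lemma EM_condition_below Phi : EM_condition Phi -> exists Lb, formula_below (Lb * m) Phi.
Proof.
case=> [[chi [s [_ Hb _ ->]]]|[chi [s [t [_ _ Hst Hb ->]]]]].
  by exists (sumn s).+1; exact: formula_below_block_pos.
have Hbt : formula_below (size t * m) chi by rewrite Hst.
have Hs := formula_below_block_pos m_gt0 Hb; have Ht := formula_below_block_pos m_gt0 Hbt.
have ls : (sumn s).+1 * m <= maxn (sumn s).+1 (sumn t).+1 * m by rewrite leq_mul2r leq_maxl orbT.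
have lt : (sumn t).+1 * m <= maxn (sumn s).+1 (sumn t).+1 * m by rewrite leq_mul2r leq_maxr orbT.
exists (maxn (sumn s).+1 (sumn t).+1).
by split; split; apply: formula_below_mono (Hs) || apply: formula_below_mono (Ht).
Qed.

Definition holds_on_subsequences (h : nat -> nat) Phi :=
  forall j, increasing j -> sat (senv (e \o h \o j)) Phi.

Lemma EM_condition_refine Phi : conj_closure EM_condition Phi ->
  forall h, increasing h -> exists j, increasing j /\ holds_on_subsequences (h \o j) Phi.
Proof.
elim=> [|p q _ IHp _ IHq|p HP] h Hh.
- by exists id; split=> // j _ /=.
- have [j1 [Hj1 G1]] := IHp h Hh.
  have [j2 [Hj2 G2]] := IHq (h \o j1) (increasing_comp Hh Hj1).
  exists (j1 \o j2); split=> [|j Hj]; first exact: increasing_comp.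
  by split; [exact: G1 (increasing_comp Hj2 Hj) | exact: G2].
case: HP => [[chi [s [Hs Hb Hall ->]]]|[chi [s [t [Hs Ht Hst Hb ->]]]]].
  exists id; split=> // j Hj; apply/sat_block_pos => //.
  rewrite (map_comp e); apply: Hall; rewrite ?size_map //.
  exact: sorted_map_increasing (increasing_comp Hh Hj) Hs.
have [j [Hj Hhom]] := ramsey (size s) (fun u => sat (cat_env (map e (map h u))) chi).
exists j; split=> // j' Hj' /=.
have Hbt : formula_below (size t * m) chi by rewrite Hst.
rewrite /= !sat_block_pos //.
have E u : map ((e \o (h \o j)) \o j') u = map e (map h (map j (map j' u))).
  by rewrite -!map_comp.
rewrite !E.
have [] : sat (cat_env (map e (map h (map j (map j' s))))) chi <->
          sat (cat_env (map e (map h (map j (map j' t))))) chi.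
  by apply: Hhom; rewrite ?size_map //; exact: sorted_map_increasing.
by split.
Qed.

Lemma EM_type_indiscernible : exists e', indiscernible e' /\ EM_type_included e e'.
Proof.
have [|e' He'] := @realize_block_type _ _ _ m_gt0 M_sat _ EM_condition_below.
  move=> Phi /EM_condition_refine /(_ id increasing_id) [j [_ Hj]].
  by exists (e \o j); exact: (Hj id increasing_id).
exists e'; split=> [chi s t Hst Hs Ht Hb | N chi Hb Hall s Hs Hsz].
  have Hbt : formula_below (size t * m) chi by rewrite -Hst.
  rewrite -(sat_block_pos m_gt0 _ Hb) -(sat_block_pos m_gt0 _ Hbt).
  have [] : sat (senv e') (fiff (rename (block_pos s) chi) (rename (block_pos t) chi)).
    by apply: He'; right; exists chi, s, t.
  by split.
subst N; rewrite -(sat_block_pos m_gt0 _ Hb).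
by apply: He'; left; exists chi, s.
Qed.

End Indiscernibles.

Section Patterns.
Variables (L : signature) (M : structure L) (n m : nat).

Implicit Types (th : formula L) (F : nat -> formula L) (g : nat -> 'I_m -> M).

(* [th (x; y)] with x at variables 0..n-1 and y the b-th block of m variables after them *)
Definition at_block b th := rename (fun v => if v < n then v else n + b * m + (v - n)) th.

Lemma sat_at_block (E : nat -> M) b th x y : formula_below (n + m) th ->
  (forall i : 'I_n, E i = x i) -> (forall o : 'I_m, E (n + b * m + o) = y o) ->
  (sat E (at_block b th) <-> holds th x y).
Proof.
move=> Hth Ex Ey; rewrite /at_block sat_rename /holds; apply: sat_below Hth _ => v Hv /=.
case: (ltnP v n) => Hvn; first by rewrite tup_envL -Ex.
have Ho : v - n < m by lia.
by rewrite tup_envR // tup_envL -Ey.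
Qed.

Lemma formula_below_at_block b N th : formula_below (n + m) th -> b < N ->
  formula_below (n + N * m) (at_block b th).
Proof.
move=> Hth HbN; apply: formula_below_rename Hth => v Hv.
case: (ltnP v n) => Hvn; first exact: leq_trans (leq_addr _ _).
have Ho : v - n < m by lia.
by rewrite -addnA ltn_add2l; nia.
Qed.

Fixpoint conj_upto N F : formula L :=
  if N is N'.+1 then fand (conj_upto N' F) (F N') else fneg (@fbot L).

Lemma sat_conj_upto (E : nat -> M) N F :
  sat E (conj_upto N F) <-> forall b, b < N -> sat E (F b).
Proof.
elim: N => [|N IH] /=; first by split=> // _ b.
rewrite IH; split=> [[HN H] b|H]; last by split=> [b Hb|]; apply: H; rewrite // ltnW.
by rewrite ltnS leq_eqVlt => /orP[/eqP -> | /HN].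
Qed.

Lemma formula_below_conj_upto K N F : (forall b, b < N -> formula_below K (F b)) ->
  formula_below K (conj_upto N F).
Proof.
elim: N => [|N IH] //= HF; split; last exact: HF.
by apply: IH => b Hb; apply: HF; rewrite ltnW.
Qed.

Definition ex_pattern N F := fexn n (conj_upto N (fun b => at_block b (F b))).

Definition realizes_pattern g N F (t : seq nat) :=
  exists x : 'I_n -> M, forall b, b < N -> holds (F b) x (g (nth 0 t b)).

Lemma formula_below_ex_pattern N F : (forall b, formula_below (n + m) (F b)) ->
  formula_below (N * m) (ex_pattern N F).
Proof.
move=> HF; apply: formula_below_fexn; apply: formula_below_conj_upto => b Hb.
exact: formula_below_at_block.
Qed.

Lemma sat_ex_pattern g t F : (forall b, formula_below (n + m) (F b)) ->
  (sat (cat_env (map g t)) (ex_pattern (size t) F) <-> realizes_pattern g (size t) F t).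
Proof.
move=> HF; have E w b : b < size t ->
    sat (prepend_env n w (cat_env (map g t))) (at_block b (F b)) <->
    holds (F b) (fun o : 'I_n => w o) (g (nth 0 t b)).
  move=> Hb; apply: sat_at_block => // [i|o]; first by rewrite /prepend_env ltn_ord.
  rewrite /prepend_env; have -> : (n + b * m + o < n) = false by lia.
  rewrite -addnA addKn (cat_env_block (ltn_ord o)) ?size_map // (nth_map 0) //.
  by congr (g _); apply: val_inj.
rewrite /ex_pattern sat_fexn; split=> [[w /sat_conj_upto Hw]|[x Hx]].
  by exists (fun o : 'I_n => w o) => b Hb; apply/E/Hw.
exists (tup_env x (default_env M)); apply/sat_conj_upto => b Hb.
by apply/E; rewrite // tup_env_ord; exact: Hx.
Qed.

Lemma realizes_pattern_transfer g g' N F :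
  EM_type_included g g' -> (forall b, formula_below (n + m) (F b)) ->
  (forall t, sorted ltn t -> size t = N -> realizes_pattern g N F t) ->
  forall s, sorted ltn s -> size s = N -> realizes_pattern g' N F s.
Proof.
move=> Hgg' HF Hg s Hs HsN; subst N; rewrite -sat_ex_pattern //.
apply: (Hgg' _ _ (formula_below_ex_pattern _ HF)) Hs erefl => t Ht Hts.
by rewrite -Hts sat_ex_pattern // Hts; exact: Hg.
Qed.

Lemma omits_pattern_transfer g g' N F :
  EM_type_included g g' -> (forall b, formula_below (n + m) (F b)) ->
  (forall t, sorted ltn t -> size t = N -> ~ realizes_pattern g N F t) ->
  forall s, sorted ltn s -> size s = N -> ~ realizes_pattern g' N F s.
Proof.
move=> Hgg' HF Hg s Hs HsN; subst N; rewrite -sat_ex_pattern //.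
apply: (Hgg' _ (fneg _) (formula_below_ex_pattern _ HF)) Hs erefl => t Ht Hts.
by rewrite /= -Hts sat_ex_pattern // Hts; exact: Hg.
Qed.

Lemma realize_type_over_sequence (m_gt0 : 0 < m) g F : aleph1_saturated M ->
  (forall b, formula_below (n + m) (F b)) ->
  (forall K, exists x : 'I_n -> M, forall i, i < K -> holds (F i) x (g i)) ->
  exists x : 'I_n -> M, forall i, holds (F i) x (g i).
Proof.
move=> M_sat HF Hfin.
have E (x : 'I_n -> M) i :
    sat (tup_env x (seq_env m_gt0 g)) (at_block i (F i)) <-> holds (F i) x (g i).
  apply: sat_at_block => // [j|o]; first by rewrite tup_envL; congr x; apply: val_inj.
  rewrite tup_envR; last by lia.
  have -> : n + i * m + o - n = i * m + o by lia.
  by rewrite (seq_env_block _ _ _ (ltn_ord o)); congr (g i); apply: val_inj.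
have [x Hx] : exists x : 'I_n -> M, forall chi, (exists i, chi = at_block i (F i)) ->
    sat (tup_env x (seq_env m_gt0 g)) chi.
  apply: M_sat => r chis /functional_choice [idx Hidx].
  have [x Hx] := Hfin (\max_(l < r) idx l).+1.
  by exists x => l; rewrite Hidx; apply/E/Hx; rewrite ltnS leq_bigmax.
by exists x => i; apply/E/Hx; exists i.
Qed.

End Patterns.

Lemma SOP3_of_indiscernible (L : signature) (M : structure L) n m (theta R : formula L)
    (g : nat -> 'I_m -> M) (c : nat -> 'I_n -> M) :
  formula_below (n + m) theta -> formula_below (n + m) R -> indiscernible g ->
  (forall i j, i <= j -> ~ exists x : 'I_n -> M, holds theta x (g j) /\ holds R x (g i)) ->
  (forall j i, holds (if i <= j then theta else R) (c j) (g i)) ->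
  has_SOP3 M n m (fand theta (fneg R)).
Proof.
move=> Hth HR Hind Hincons Hc.
have Hc_theta j i : i <= j -> holds theta (c j) (g i) by move=> Hij; move: (Hc j i); rewrite Hij.
have Hc_R j i : j < i -> holds R (c j) (g i) by move=> Hji; move: (Hc j i); rewrite leqNgt Hji.
exists (fand R (fneg theta)), g, c; split=> //.
- by move=> [x [w [[Htheta _] [_ /(_ Htheta)]]]].
- split=> i j Hij; split=> [|Hcontra]; [exact: Hc_theta | | exact: Hc_R |].
    by apply: (Hincons i j Hij); exists (c j); split=> //; exact: Hc_theta.
  by apply: (Hincons j.+1 i Hij); exists (c j); split=> //; exact: Hc_R.
- by move=> i j Hij [x [[H1 _] [H2 _]]]; apply: (Hincons i j (ltnW Hij)); exists x.
Qed.

Section InfiniteCOP.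
Variables (L : signature) (M : structure L) (n k : nat) (theta : formula L).

Lemma inf_COP_param_gt0 : has_inf_COP M n k theta -> 0 < k.
Proof.
move=> [a [b Hcop]]; rewrite lt0n; apply/eqP => k0.
have Eb : b 0 = b 1.
  by apply: functional_extensionality => o; exfalso; have := ltn_ord o; rewrite [X in _ < X]k0.
have [x Hx] := (Hcop 1 (fun _ => 0) (fun _ => 1)).2 (fun _ _ => isT).
suff : forall l l' : 'I_1, 0 < 0 by move/(_ ord0 ord0).
by apply/(Hcop 1 (fun _ => 0) (fun _ => 0)); exists x => l; rewrite Eb; exact: Hx.
Qed.

Hypothesis theta_below : formula_below (n + k) theta.

Definition pair_tuple (y z : 'I_k -> M) : 'I_(k + k) -> M :=
  fun o => tup_env y (tup_env z (default_env M)) o.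

(* theta (x; z) in the variables of phi_of n k theta *)
Definition theta_z := rename (fun v => if v < n then v else v + k) theta.

Lemma formula_below_theta : formula_below (n + (k + k)) theta.
Proof. by apply: formula_below_mono theta_below; rewrite leq_add2l leq_addr. Qed.

Lemma formula_below_theta_z : formula_below (n + (k + k)) theta_z.
Proof. by apply: formula_below_rename theta_below => v Hv; case: ifP => _; lia. Qed.

Lemma holds_pair_y (x : 'I_n -> M) y z : holds theta x (pair_tuple y z) <-> holds theta x y.
Proof.
rewrite /holds; apply: sat_below theta_below _ => v Hv.
case: (ltnP v n) => Hvn; first by rewrite !tup_envL.
have Hvk : v - n < k by lia.
have Hvm : v - n < k + k by lia.
by rewrite [LHS]tup_envR // [RHS]tup_envR // (tup_envL _ _ Hvm) /pair_tuple /= !(tup_envL _ _ Hvk).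
Qed.

Lemma holds_pair_z (x : 'I_n -> M) y z : holds theta_z x (pair_tuple y z) <-> holds theta x z.
Proof.
rewrite /holds /theta_z sat_rename; apply: sat_below theta_below _ => v Hv /=.
case: (ltnP v n) => Hvn; first by rewrite !tup_envL.
have Hvk : v - n < k by lia.
have Hvm : v + k - n < k + k by lia.
rewrite [LHS]tup_envR; last by lia.
rewrite [RHS]tup_envR // (tup_envL _ _ Hvm) /pair_tuple /= tup_envR; last by lia.
by have -> : v + k - n - k = v - n by lia.
Qed.

Variables a b : nat -> 'I_k -> M.
Hypothesis a_b_COP : forall (m : nat) (I J : 'I_m -> nat),
  (exists x : 'I_n -> M, forall l, holds theta x (a (I l)) /\ holds theta x (b (J l)))
  <-> (forall l l', I l < J l').

Let e i := pair_tuple (a i) (b i).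

Definition cut_pattern j p := if p <= j then theta else theta_z.

Lemma COP_omits_diag t : sorted ltn t -> size t = 1 ->
  ~ realizes_pattern n e 1 (fun _ => fand theta theta_z) t.
Proof.
case: t => [|i [|]] // _ _ [x /(_ 0 isT) [/holds_pair_y Ha /holds_pair_z Hb]].
suff : forall l l' : 'I_1, i < i by move/(_ ord0 ord0); rewrite ltnn.
by apply/(a_b_COP (fun _ => i) (fun _ => i)); exists x.
Qed.

Lemma COP_omits_lt t : sorted ltn t -> size t = 2 ->
  ~ realizes_pattern n e 2 (fun p => if p == 0 then theta_z else theta) t.
Proof.
case: t => [|i [|j [|]]] //= /andP[Hij _] _ [x Hx].
have /holds_pair_z Hb := Hx 0 isT; have /holds_pair_y Ha := Hx 1 isT.
suff : forall l l' : 'I_1, j < i by move/(_ ord0 ord0); rewrite ltnNge ltnW.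
by apply/(a_b_COP (fun _ => j) (fun _ => i)); exists x.
Qed.

Lemma COP_realizes_cut j t : j.+1 < size t -> sorted ltn t ->
  realizes_pattern n e (size t) (cut_pattern j) t.
Proof.
move=> Hj Ht.
have Hnth p q : p < q -> q < size t -> nth 0 t p < nth 0 t q.
  by move=> Hpq Hq; apply: (sorted_ltn_nth ltn_trans) => //; rewrite inE (ltn_trans Hpq).
have HIJ (l l' : 'I_(size t)) : nth 0 t (minn l j) < nth 0 t (maxn l' j.+1).
  apply: Hnth; first by rewrite leq_max ltnS geq_minr orbT.
  by rewrite gtn_max ltn_ord.
have [x Hx] := (a_b_COP _ _).2 HIJ.
exists x => p Hp; rewrite /cut_pattern; case: ifP => Hpj.
  by apply/holds_pair_y; have := (Hx (Ordinal Hp)).1; rewrite /= (minn_idPl Hpj).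
apply/holds_pair_z; have := (Hx (Ordinal Hp)).2; rewrite /= (maxn_idPl _) //.
by rewrite ltnNge Hpj.
Qed.

Lemma cut_pattern_below j p : formula_below (n + (k + k)) (cut_pattern j p).
Proof.
rewrite /cut_pattern; case: ifP => _;
  [exact: formula_below_theta | exact: formula_below_theta_z].
Qed.

Lemma inf_COP_indiscernible (m_gt0 : 0 < k + k) : aleph1_saturated M ->
  exists g : nat -> 'I_(k + k) -> M, [/\ indiscernible g,
    forall i j, i <= j -> ~ exists x : 'I_n -> M, holds theta x (g j) /\ holds theta_z x (g i)
  & forall j K, exists x : 'I_n -> M, forall i, i < K -> holds (cut_pattern j i) x (g i)].
Proof.
move=> M_sat; have [g [g_ind g_EM]] := EM_type_indiscernible m_gt0 M_sat e.
have below_z p : formula_below (n + (k + k)) (if p == 0 then theta_z else theta).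
  by case: ifP => _; [exact: formula_below_theta_z | exact: formula_below_theta].
exists g; split=> // [i j|j K].
  rewrite leq_eqVlt => /orP[/eqP <-|Hij] [x [Hj Hi]].
    apply: (omits_pattern_transfer g_EM _ COP_omits_diag (s := [:: i])) => //.
      by move=> _; split; [exact: formula_below_theta | exact: formula_below_theta_z].
    by exists x => -[] // _; split.
  apply: (omits_pattern_transfer g_EM below_z COP_omits_lt (s := [:: i; j])) => //=.
    by rewrite Hij.
  by exists x => -[|[|]].
set N := maxn K j.+2.
have [|x Hx] := realizes_pattern_transfer g_EM (@cut_pattern_below j) _
  (iota_ltn_sorted 0 N) (size_iota 0 N).
  by move=> t Ht Hsz; rewrite -Hsz; apply: COP_realizes_cut; rewrite ?Hsz ?leq_maxr.
exists x => i Hi; have HiN : i < N by rewrite (leq_trans Hi) ?leq_maxl.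
by have := Hx i HiN; rewrite nth_iota.
Qed.

End InfiniteCOP.

Theorem mainTheorem9 (L : signature) (M : structure L) (n k : nat)
  (theta : formula L) :
  aleph1_saturated M ->
  formula_below (n + k) theta ->
  has_inf_COP M n k theta ->
  has_SOP3 M n (k + k) (phi_of n k theta).
Proof.
move=> M_sat theta_below COP.
have m_gt0 : 0 < k + k by rewrite addn_gt0 (inf_COP_param_gt0 COP).
have [a [b a_b_COP]] := COP.
have [g [g_ind g_omits g_cut]] := inf_COP_indiscernible theta_below a_b_COP m_gt0 M_sat.
have [c Hc] : exists c : nat -> 'I_n -> M,
    forall j i, holds (cut_pattern n k theta j i) (c j) (g i).
  apply: (functional_choice (fun j (x : 'I_n -> M) =>
    forall i, holds (cut_pattern n k theta j i) x (g i))) => j.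
  apply: (realize_type_over_sequence m_gt0 M_sat (cut_pattern_below theta_below j)).
  exact: g_cut.
exact: SOP3_of_indiscernible (formula_below_theta theta_below)
  (formula_below_theta_z theta_below) g_ind g_omits Hc.
Qed.
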